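(* Let $(n_k)_{k\ge1}$ be a strictly increasing sequence of positive integers. There exists an infinite set $\mathcal{K}\subset\mathbb{N}$ such that the set $$L\Big(\{m\in\mathbb{N}: m\ge2\}\setminus\bigcup_{k\in\mathcal{K}}\{m\in\mathbb{N}: n_k\le m<n_{k+1}\}\Big)$$ is lineable.
   Context: $\ell^\infty$ is the space of bounded real sequences with the sup norm. For $x\in\ell^\infty$, $L_x$ denotes the set of accumulation points (subsequential limits) of $x$. For a set $A$ of cardinalities, $L(A)=\{x\in\ell^\infty: |L_x|\in A\}$. A subset $Y$ of a vector space is lineable if $Y\cup\{0\}$ contains an infinite-dimensional linear subspace. *)

From Stdlib Require Import Reals List.
Open Scope R_scope.

Definition bounded_seq (x : nat -> R) : Prop :=
  exists M : R, forall t : nat, Rabs (x t) <= M.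

Definition accum_pt (x : nat -> R) (a : R) : Prop :=
  exists phi : nat -> nat,
    (forall k, (phi k < phi (S k))%nat) /\ Un_cv (fun k => x (phi k)) a.

Definition has_card (P : R -> Prop) (m : nat) : Prop :=
  exists l : list R, NoDup l /\ length l = m /\ (forall a, P a <-> In a l).

Definition Lset (A : nat -> Prop) (x : nat -> R) : Prop :=
  bounded_seq x /\ exists m : nat, A m /\ has_card (accum_pt x) m.

Definition zero_seq : nat -> R := fun _ => 0.

Definition lin_subspace (S : (nat -> R) -> Prop) : Prop :=
  (forall x, S x -> bounded_seq x) /\
  S zero_seq /\
  (forall x y, S x -> S y -> S (fun t => x t + y t)) /\
  (forall (c : R) x, S x -> S (fun t => c * x t)).

Fixpoint lincomb (n : nat) (c : nat -> R) (v : nat -> nat -> R) (t : nat) : R :=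
  match n with
  | O => 0
  | S n' => lincomb n' c v t + c n' * v n' t
  end.

Definition lin_indep (n : nat) (v : nat -> nat -> R) : Prop :=
  forall c : nat -> R, (forall t, lincomb n c v t = 0) ->
    forall i, (i < n)%nat -> c i = 0.

Definition inf_dim (S : (nat -> R) -> Prop) : Prop :=
  forall n : nat, exists v : nat -> nat -> R,
    (forall i, (i < n)%nat -> S (v i)) /\ lin_indep n v.

Definition lineable (Y : (nat -> R) -> Prop) : Prop :=
  exists S : (nat -> R) -> Prop,
    lin_subspace S /\ inf_dim S /\ (forall x, S x -> Y x \/ x = zero_seq).

From Stdlib Require Import Reals List Lia Lra FinFun Classical FunctionalExtensionality.
Open Scope R_scope.

(* Encode integers in a mixed radix whose digit ranges grow fast along the
   sequence n: place values P_0 = 1, P_(i+1) = P_i * M_i, with radices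
   M_0 = 2 and M_(i+1) = n_(P_(i+1) + 2).  The digit sequences
   v_i(t) = floor(t / P_i) mod M_i are bounded and linearly independent
   (v_j(P_i) is 1 if j = i and 0 otherwise), so their span is an
   infinite-dimensional subspace of l^infty.  A nonzero combination whose top
   nonzero coefficient is c_i is periodic with period P_(i+1), so its
   accumulation points are its finitely many values on one period: their
   number m satisfies M_i <= m <= P_(i+1), the lower bound coming from the
   distinct values k * c_i at t = k * P_i, k < M_i.  Choosing
   K = { P_(j+1) + 1 : j in N }, every such m lies outside all windows
   [n_k, n_(k+1)), k in K.  The file first treats periodic sequences, then
   finite linear combinations and spans, then the mixed-radix construction,
   and derives the theorem at the end. *)

Definition periodic (x : nat -> R) (P : nat) : Prop :=
  forall t, x (t + P)%nat = x t.

Lemma periodic_mul (x : nat -> R) (P : nat) :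
  periodic x P -> forall t k, x (t + k * P)%nat = x t.
Proof.
  intros Hper t k; induction k as [|k IH].
  - now rewrite Nat.mul_0_l, Nat.add_0_r.
  - replace (t + S k * P)%nat with (t + k * P + P)%nat by lia.
    now rewrite Hper.
Qed.

Lemma periodic_value_in_period (x : nat -> R) (P : nat) :
  (0 < P)%nat -> periodic x P -> forall t, In (x t) (map x (seq 0 P)).
Proof.
  intros HP Hper t. apply in_map_iff. exists (t mod P)%nat. split.
  - rewrite (Nat.div_mod_eq t P) at 2.
    rewrite Nat.add_comm, Nat.mul_comm. symmetry. apply periodic_mul, Hper.
  - apply in_seq. pose proof (Nat.mod_upper_bound t P). lia.
Qed.

Lemma separated_from_list (l : list R) (a : R) :
  ~ In a l -> exists del, 0 < del /\ forall y, In y l -> del <= Rabs (y - a).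
Proof.
  induction l as [|y l IH]; intros Hnin.
  - exists 1. split; [lra | intros y []].
  - destruct IH as [d [Hd Hsep]]; [intros Hin; apply Hnin; now right|].
    assert (Hy : 0 < Rabs (y - a)).
    { apply Rabs_pos_lt. intros E. apply Hnin. left. lra. }
    exists (Rmin d (Rabs (y - a))). split; [now apply Rmin_pos|].
    intros z [<-|Hz]; [apply Rmin_r|].
    eapply Rle_trans; [apply Rmin_l | auto].
Qed.

Lemma periodic_accum_pt (x : nat -> R) (P : nat) :
  (0 < P)%nat -> periodic x P -> forall a, accum_pt x a <-> In a (map x (seq 0 P)).
Proof.
  intros HP Hper a; split.
  - intros [phi [_ Hcv]].
    destruct (in_dec Req_EM_T a (map x (seq 0 P))) as [Hin|Hnin]; auto.
    destruct (separated_from_list _ a Hnin) as [del [Hdel Hsep]].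
    destruct (Hcv del Hdel) as [N HN]. specialize (HN N (le_n N)).
    specialize (Hsep _ (periodic_value_in_period x P HP Hper (phi N))).
    unfold R_dist in HN. lra.
  - intros Hin. apply in_map_iff in Hin. destruct Hin as [t0 [<- _]].
    exists (fun k => t0 + k * P)%nat. split; [intros k; nia|].
    intros eps Heps. exists 0%nat. intros k _. unfold R_dist.
    rewrite (periodic_mul x P Hper), Rminus_diag, Rabs_R0. lra.
Qed.

Lemma periodic_accum_card (x : nat -> R) (P : nat) :
  (0 < P)%nat -> periodic x P ->
  exists m, has_card (accum_pt x) m /\ (m <= P)%nat /\
    forall l, NoDup l -> (forall a, In a l -> exists t, x t = a) -> (length l <= m)%nat.
Proof.
  intros HP Hper.
  set (vals := nodup Req_EM_T (map x (seq 0 P))).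
  exists (length vals). split; [|split].
  - exists vals. split; [apply NoDup_nodup | split; [reflexivity|]].
    intros a. rewrite (periodic_accum_pt x P HP Hper). unfold vals.
    now rewrite nodup_In.
  - assert (Hincl : incl vals (map x (seq 0 P))).
    { intros y Hy. unfold vals in Hy. now apply nodup_In in Hy. }
    pose proof (NoDup_incl_length (NoDup_nodup Req_EM_T _) Hincl) as Hlen.
    fold vals in Hlen. now rewrite length_map, length_seq in Hlen.
  - intros l Hnd Hvals. apply NoDup_incl_length; [exact Hnd|].
    intros a Ha. destruct (Hvals a Ha) as [t <-]. unfold vals.
    apply nodup_In, (periodic_value_in_period x P HP Hper).
Qed.

Lemma lincomb_ext (d : nat) (c1 c2 : nat -> R) (v : nat -> nat -> R) (t : nat) :
  (forall i, (i < d)%nat -> c1 i = c2 i) -> lincomb d c1 v t = lincomb d c2 v t.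
Proof.
  induction d as [|d IH]; intros H; simpl; [reflexivity|].
  rewrite IH, (H d) by (intros; try apply H; lia). reflexivity.
Qed.

Lemma lincomb_add (d : nat) (c1 c2 : nat -> R) (v : nat -> nat -> R) (t : nat) :
  lincomb d (fun i => c1 i + c2 i) v t = lincomb d c1 v t + lincomb d c2 v t.
Proof. induction d as [|d IH]; simpl; [lra|]. rewrite IH. ring. Qed.

Lemma lincomb_scal (d : nat) (a : R) (c : nat -> R) (v : nat -> nat -> R) (t : nat) :
  lincomb d (fun i => a * c i) v t = a * lincomb d c v t.
Proof. induction d as [|d IH]; simpl; [ring|]. rewrite IH. ring. Qed.

(* Padding with zero coefficients does not change a combination; this lets
   two combinations of different lengths be added. *)
Lemma lincomb_pad (d e : nat) (c : nat -> R) (v : nat -> nat -> R) (t : nat) :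
  lincomb (d + e) (fun i => if (i <? d)%nat then c i else 0) v t = lincomb d c v t.
Proof.
  induction e as [|e IH].
  - rewrite Nat.add_0_r. apply lincomb_ext. intros i Hi.
    destruct (Nat.ltb_spec i d); [reflexivity | lia].
  - rewrite Nat.add_succ_r. simpl. rewrite IH.
    destruct (Nat.ltb_spec (d + e) d); [lia|]. ring.
Qed.

Lemma lincomb_terms_zero (d : nat) (c : nat -> R) (v : nat -> nat -> R) (t : nat) :
  (forall j, (j < d)%nat -> c j * v j t = 0) -> lincomb d c v t = 0.
Proof.
  induction d as [|d IH]; intros H; simpl; [reflexivity|].
  rewrite IH, (H d) by (intros; try apply H; lia). ring.
Qed.

Lemma lincomb_single (d : nat) (c : nat -> R) (v : nat -> nat -> R) (t i : nat) :
  (i < d)%nat -> (forall j, (j < d)%nat -> j <> i -> c j * v j t = 0) ->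
  lincomb d c v t = c i * v i t.
Proof.
  induction d as [|d IH]; intros Hi H; [lia|]. simpl.
  destruct (Nat.eq_dec i d) as [->|Hne].
  - rewrite lincomb_terms_zero; [ring|]. intros j Hj. apply H; lia.
  - rewrite IH, (H d) by (intros; try apply H; lia). ring.
Qed.

Lemma lincomb_bounded (d : nat) (c : nat -> R) (v : nat -> nat -> R) :
  (forall i, bounded_seq (v i)) -> bounded_seq (lincomb d c v).
Proof.
  intros Hv. induction d as [|d [M HM]].
  - exists 0. intros t; simpl. rewrite Rabs_R0; lra.
  - destruct (Hv d) as [Md HMd]. exists (M + Rabs (c d) * Md).
    intros t; simpl. eapply Rle_trans; [apply Rabs_triang|].
    apply Rplus_le_compat; [apply HM|]. rewrite Rabs_mult.
    apply Rmult_le_compat_l; [apply Rabs_pos | apply HMd].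
Qed.

Lemma lincomb_periodic (d : nat) (c : nat -> R) (v : nat -> nat -> R) (P : nat) :
  (forall j, (j < d)%nat -> periodic (v j) P) -> periodic (lincomb d c v) P.
Proof.
  intros Hv t. induction d as [|d IH]; simpl; [reflexivity|].
  rewrite IH, (Hv d) by (intros; try apply Hv; lia). reflexivity.
Qed.

Lemma lincomb_top (d : nat) (c : nat -> R) (v : nat -> nat -> R) :
  (exists t, lincomb d c v t <> 0) ->
  exists i, (i < d)%nat /\ c i <> 0 /\ forall t, lincomb d c v t = lincomb (S i) c v t.
Proof.
  induction d as [|d IH]; intros [t Ht]; [simpl in Ht; lra|].
  destruct (Req_EM_T (c d) 0) as [E|E].
  - assert (Hdrop : forall s, lincomb (S d) c v s = lincomb d c v s).
    { intros s; simpl. rewrite E. ring. }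
    destruct IH as [i [Hi [Hci Htrunc]]]; [exists t; now rewrite <- Hdrop|].
    exists i. split; [lia|]. split; [exact Hci|]. intros s. now rewrite Hdrop.
  - exists d. repeat split; auto.
Qed.

Definition span (v : nat -> nat -> R) (x : nat -> R) : Prop :=
  exists d c, forall t, x t = lincomb d c v t.

Lemma span_subspace (v : nat -> nat -> R) :
  (forall i, bounded_seq (v i)) -> lin_subspace (span v).
Proof.
  intros Hv. split; [|split; [|split]].
  - intros x [d [c Hx]]. destruct (lincomb_bounded d c v Hv) as [M HM].
    exists M. intros t. rewrite Hx. apply HM.
  - exists 0%nat, (fun _ => 0). reflexivity.
  - intros x y [d1 [c1 H1]] [d2 [c2 H2]].
    exists (d1 + d2)%nat, (fun i => (if (i <? d1)%nat then c1 i else 0)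
                                 + (if (i <? d2)%nat then c2 i else 0)).
    intros t. rewrite lincomb_add, lincomb_pad, Nat.add_comm, lincomb_pad, H1, H2.
    reflexivity.
  - intros a x [d [c H]]. exists d, (fun i => a * c i). intros t.
    rewrite lincomb_scal, H. reflexivity.
Qed.

Lemma span_inf_dim (v : nat -> nat -> R) :
  (forall d, lin_indep d v) -> inf_dim (span v).
Proof.
  intros Hind d. exists v. split; [|apply Hind].
  intros i _. exists (S i), (fun j => if (j =? i)%nat then 1 else 0). intros t.
  rewrite (lincomb_single _ _ _ _ i) by
    (lia || intros j _ Hji; apply Nat.eqb_neq in Hji; rewrite Hji; ring).
  rewrite Nat.eqb_refl. ring.
Qed.

Lemma lineable_of_family (Y : (nat -> R) -> Prop) (v : nat -> nat -> R) :
  (forall i, bounded_seq (v i)) -> (forall d, lin_indep d v) ->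
  (forall x, span v x -> bounded_seq x -> (exists t, x t <> 0) -> Y x) ->
  lineable Y.
Proof.
  intros Hbd Hind HY. pose proof (span_subspace v Hbd) as Hsub.
  exists (span v). split; [exact Hsub | split; [now apply span_inf_dim|]].
  intros x Hx. destruct (classic (exists t, x t <> 0)) as [Hnz|Hz].
  - left. apply HY; auto. destruct Hsub as [Hb _]. now apply Hb.
  - right. apply functional_extensionality. intros t. unfold zero_seq.
    apply NNPP. intros H. apply Hz. eauto.
Qed.

Section MixedRadix.

Variable n : nat -> nat.
Hypothesis hpos : forall k : nat, (1 <= k)%nat -> (0 < n k)%nat.
Hypothesis hinc : forall k : nat, (1 <= k)%nat -> (n k < n (S k))%nat.

Lemma n_ge_index (k : nat) : (1 <= k)%nat -> (k <= n k)%nat.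
Proof.
  induction k as [|k IH]; intros Hk; [lia|].
  destruct (Nat.eq_dec k 0) as [->|Hk0]; [specialize (hpos 1%nat); lia|].
  specialize (IH ltac:(lia)). specialize (hinc k ltac:(lia)). lia.
Qed.

Lemma n_monotone (a b : nat) : (1 <= a)%nat -> (a <= b)%nat -> (n a <= n b)%nat.
Proof.
  intros Ha Hab. induction Hab as [|b Hab IH]; [lia|].
  specialize (hinc b ltac:(lia)). lia.
Qed.

Fixpoint radix_data (i : nat) : nat * nat :=
  match i with
  | O => (1%nat, 2%nat)
  | S i' => let p := (fst (radix_data i') * snd (radix_data i'))%nat in
            (p, n (p + 2)%nat)
  end.
Definition place (i : nat) : nat := fst (radix_data i).
Definition radix (i : nat) : nat := snd (radix_data i).

Lemma place_S (i : nat) : place (S i) = (place i * radix i)%nat.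
Proof. reflexivity. Qed.

Lemma radix_S (i : nat) : radix (S i) = n (place (S i) + 2)%nat.
Proof. reflexivity. Qed.

Lemma radix_ge2 (i : nat) : (2 <= radix i)%nat.
Proof.
  destruct i as [|i]; [cbn; lia|]. rewrite radix_S.
  pose proof (n_ge_index (place (S i) + 2) ltac:(lia)). lia.
Qed.

Lemma place_gt (i : nat) : (i < place i)%nat.
Proof.
  induction i as [|i IH]; [cbn; lia|]. rewrite place_S.
  pose proof (radix_ge2 i). nia.
Qed.

Lemma place_strict (i j : nat) : (i < j)%nat -> (place i < place j)%nat.
Proof.
  intros Hij. induction Hij as [|j Hij IH]; rewrite place_S.
  - pose proof (radix_ge2 i). pose proof (place_gt i). nia.
  - pose proof (radix_ge2 j). nia.
Qed.

Lemma place_le (i j : nat) : (i <= j)%nat -> (place i <= place j)%nat.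
Proof.
  intros Hij. destruct (Nat.eq_dec i j) as [->|]; [lia|].
  pose proof (place_strict i j ltac:(lia)). lia.
Qed.

Lemma place_divide (i j : nat) : (i <= j)%nat -> Nat.divide (place i) (place j).
Proof.
  intros Hij. induction Hij as [|j Hij IH]; [apply Nat.divide_refl|].
  rewrite place_S. now apply Nat.divide_mul_l.
Qed.

Lemma radix_monotone (i j : nat) : (1 <= i)%nat -> (i <= j)%nat -> (radix i <= radix j)%nat.
Proof.
  intros Hi Hij. destruct i as [|i]; [lia|]. destruct j as [|j]; [lia|].
  rewrite !radix_S. apply n_monotone; [lia|].
  pose proof (place_le (S i) (S j) Hij). lia.
Qed.

Definition digit (i t : nat) : R := INR ((t / place i) mod radix i).

Lemma digit_bounded (i : nat) : bounded_seq (digit i).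
Proof.
  exists (INR (radix i)). intros t. unfold digit.
  rewrite Rabs_right by apply Rle_ge, pos_INR. apply le_INR.
  pose proof (radix_ge2 i).
  pose proof (Nat.mod_upper_bound (t / place i) (radix i)). lia.
Qed.

Lemma digit_periodic (j i : nat) : (j < i)%nat -> periodic (digit j) (place i).
Proof.
  intros Hji t. unfold digit. f_equal.
  destruct (place_divide (S j) i Hji) as [r Hr].
  rewrite Hr, place_S. pose proof (place_gt j).
  replace (r * (place j * radix j))%nat with ((r * radix j) * place j)%nat by lia.
  rewrite Nat.div_add by lia. apply Nat.Div0.mod_add.
Qed.

Lemma digit_low (j i k : nat) : (j < i)%nat -> digit j (k * place i) = 0.
Proof.
  intros Hji. rewrite <- (Nat.add_0_l (k * place i)).
  rewrite (periodic_mul _ _ (digit_periodic j i Hji)).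
  unfold digit. now rewrite Nat.Div0.div_0_l, Nat.Div0.mod_0_l.
Qed.

Lemma digit_diag (i k : nat) : (k < radix i)%nat -> digit i (k * place i) = INR k.
Proof.
  intros Hk. unfold digit. pose proof (place_gt i).
  rewrite Nat.div_mul by lia. now rewrite Nat.mod_small.
Qed.

Lemma digit_high (i j : nat) : (i < j)%nat -> digit j (place i) = 0.
Proof.
  intros Hij. unfold digit. rewrite Nat.div_small by now apply place_strict.
  now rewrite Nat.Div0.mod_0_l.
Qed.

(* Evaluating at t = P_i isolates the i-th coefficient. *)
Lemma digit_indep (d : nat) : lin_indep d digit.
Proof.
  intros c Hc i Hi. specialize (Hc (place i)).
  rewrite (lincomb_single _ _ _ _ i) in Hc; [|exact Hi|].
  - rewrite <- (Nat.mul_1_l (place i)) in Hc.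
    rewrite digit_diag in Hc by (pose proof (radix_ge2 i); lia).
    simpl in Hc. lra.
  - intros j _ Hji. destruct (Nat.lt_ge_cases j i).
    + rewrite <- (Nat.mul_1_l (place i)), digit_low by lia. ring.
    + rewrite digit_high by lia. ring.
Qed.

Lemma digit_comb_card (i : nat) (c : nat -> R) :
  c i <> 0 ->
  exists m, (radix i <= m <= place (S i))%nat /\ has_card (accum_pt (lincomb (S i) c digit)) m.
Proof.
  intros Hci.
  assert (Hper : periodic (lincomb (S i) c digit) (place (S i))).
  { apply lincomb_periodic. intros j Hj. apply digit_periodic. lia. }
  assert (Hpos : (0 < place (S i))%nat) by (pose proof (place_gt (S i)); lia).
  destruct (periodic_accum_card _ _ Hpos Hper)
    as [m [Hcard [Hle Hlower]]].
  exists m. split; [split|exact Hcard]; [|exact Hle].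
  set (multiples := map (fun k => INR k * c i) (seq 0 (radix i))).
  assert (Hnd : NoDup multiples).
  { apply Injective_map_NoDup; [|apply seq_NoDup].
    intros a b E. apply INR_eq. eapply Rmult_eq_reg_r; eauto. }
  specialize (Hlower multiples Hnd).
  unfold multiples in Hlower. rewrite length_map, length_seq in Hlower.
  apply Hlower. intros a Ha. apply in_map_iff in Ha. destruct Ha as [k [<- Hk]].
  apply in_seq in Hk. exists (k * place i)%nat.
  rewrite (lincomb_single _ _ _ _ i) by
    (lia || intros j Hj Hji; rewrite digit_low by lia; ring).
  rewrite digit_diag by lia. ring.
Qed.

(* The selected indices k = P_(j+1) + 1, whose windows [n_k, n_(k+1)) end at
   n_(k+1) = M_(j+1). *)
Definition selected (k : nat) : Prop := exists j, k = (place (S j) + 1)%nat.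

(* Every count between M_i and P_(i+1) avoids all selected windows: windows
   with j < i end below M_i, those with j >= i start above P_(i+1). *)
Lemma count_avoids_windows (i m : nat) :
  (radix i <= m <= place (S i))%nat ->
  ~ (exists k, selected k /\ (n k <= m)%nat /\ (m < n (S k))%nat).
Proof.
  intros Hm [k [[j ->] [Hlo Hhi]]].
  replace (S (place (S j) + 1)) with (place (S j) + 2)%nat in Hhi by lia.
  rewrite <- radix_S in Hhi.
  destruct (Nat.lt_ge_cases j i).
  - pose proof (radix_monotone (S j) i ltac:(lia) ltac:(lia)). lia.
  - pose proof (n_ge_index (place (S j) + 1) ltac:(lia)).
    pose proof (place_le (S i) (S j) ltac:(lia)). lia.
Qed.

End MixedRadix.

Theorem proposition2p6 (n : nat -> nat)
  (hpos : forall k : nat, (1 <= k)%nat -> (0 < n k)%nat)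
  (hinc : forall k : nat, (1 <= k)%nat -> (n k < n (S k))%nat) :
  exists K : nat -> Prop,
    (forall k, K k -> (1 <= k)%nat) /\
    (forall N : nat, exists k, K k /\ (N < k)%nat) /\
    lineable (Lset (fun m : nat =>
       (2 <= m)%nat /\ ~ (exists k, K k /\ (n k <= m)%nat /\ (m < n (S k))%nat))).
Proof.
  exists (selected n). split; [|split].
  - intros k [j ->]. lia.
  - intros N. exists (place n (S N) + 1)%nat. split; [now exists N|].
    pose proof (place_gt n hpos hinc (S N)). lia.
  - apply (lineable_of_family _ (digit n)).
    + apply digit_bounded; assumption.
    + apply digit_indep; assumption.
    + intros x [d [c Hx]] Hbd [t Ht].
      destruct (lincomb_top d c (digit n)) as [i [_ [Hci Htrunc]]];
        [exists t; now rewrite <- Hx|].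
      destruct (digit_comb_card n hpos hinc i c Hci) as [m [Hm Hcard]].
      assert (Hxi : x = lincomb (S i) c (digit n)).
      { apply functional_extensionality. intros s. now rewrite Hx. }
      split; [exact Hbd|]. exists m. rewrite Hxi. split; [split|exact Hcard].
      * pose proof (radix_ge2 n hpos hinc i). lia.
      * exact (count_avoids_windows n hpos hinc i m Hm).
Qed.
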